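(* Let $N=2n\ge2$ and $L\ge1$. For every $c=c_L\otimes\cdots\otimes c_1\in B^{1\otimes L}$, $$\overline D_{B^{1\otimes L}}(c)=\overline D_{B^{1\vee\otimes L}}(c^{\vee*}),\qquad\text{where } c^{\vee*}=c_L^{\vee*}\otimes\cdots\otimes c_1^{\vee*}\ \text{ and } j^{\vee*}=(N+1-j)^\vee.$$
   Context: $B^1$ is the $U_q'(A^{(1)}_{N-1})$-crystal with elements $1,\dots,N$, $f_i(i)=i+1$ ($1\le i\le N-1$), $f_0(N)=1$, all other $f_i$ zero. $B^{1\vee}$ is its dual: elements $j^\vee$, $f_i(b^\vee)=e_i(b)^\vee$ (so $f_i((i+1)^\vee)=i^\vee$, $f_0(1^\vee)=N^\vee$). Tensor products: $f_i(b_2\otimes b_1)=f_i(b_2)\otimes b_1$ if $\varepsilon_i(b_2)\ge\varphi_i(b_1)$, else $b_2\otimes f_i(b_1)$; $e_i(b_2\otimes b_1)=e_i(b_2)\otimes b_1$ if $\varepsilon_i(b_2)>\varphi_i(b_1)$, else $b_2\otimes e_i(b_1)$. For $B_0\in\{B^1,B^{1\vee}\}$ with leading element $u=1$ (resp. $u=N^\vee$), the local coenergy $H:B_0\otimes B_0\to\mathbb Z_{\ge0}$ is the unique function constant on classical components (components after deleting $0$-arrows) with $H(u\otimes u)=0$ and, whenever $e_0(x\otimes y)\ne0$, $H(e_0(x\otimes y))=H(x\otimes y)+1$ if $e_0(x\otimes y)=e_0(x)\otimes y$ and $H(x\otimes y)-1$ otherwise. The intrinsic coenergy on $B_0^{\otimes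 L}$ is $\overline D_{B_0^{\otimes L}}(b_L\otimes\cdots\otimes b_1)=\sum_{i=1}^{L-1}(L-i)\,H(b_{i+1}\otimes b_i)$. *)

From mathcomp Require Import all_boot.
Set Implicit Arguments. Unset Strict Implicit. Unset Printing Implicit Defensive.

(* Colours of U_q'(A^{(1)}_{N-1}) are i : 'I_N (colour 0 = val i == 0).
   A (finite) crystal on T is given by its Kashiwara operators
   e f : 'I_N -> T -> option T  (None stands for 0). *)

Section Crystal.
Variable N : nat.

(* B^1 : elements 1..N, encoded as x : 'I_N with x standing for x+1.
   f_i(i) = i+1 (1 <= i <= N-1), f_0(N) = 1; e_i is the inverse. *)
Definition B1f (i x : 'I_N) : option 'I_N :=
  if (if val i == 0 then val x == N.-1 else (val x).+1 == val i)
  then insub ((val x).+1 %% N) else None.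
Definition B1e (i x : 'I_N) : option 'I_N :=
  if (if val i == 0 then val x == 0 else val x == val i)
  then insub ((val x + N.-1) %% N) else None.

Variable T : finType.
Variables (e f : 'I_N -> T -> option T).

Definition str (g : 'I_N -> T -> option T) (i : 'I_N) (b : T) : nat :=
  \max_(k < #|T|.+1 | iter k (obind (g i)) (Some b) != None) k.
Definition eps i b := str e i b.
Definition phi i b := str f i b.

(* tensor product b2 (x) b1, encoded as the pair (b2, b1) *)
Definition tens_f (i : 'I_N) (p : T * T) : option (T * T) :=
  let: (b2, b1) := p in
  if eps i b2 >= phi i b1 then omap (fun x => (x, b1)) (f i b2)
  else omap (fun y => (b2, y)) (f i b1).
Definition tens_e (i : 'I_N) (p : T * T) : option (T * T) :=
  let: (b2, b1) := p in
  if eps i b2 > phi i b1 then omap (fun x => (x, b1)) (e i b2)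
  else omap (fun y => (b2, y)) (e i b1).

Definition classical_rel : rel (T * T) := fun p q =>
  [exists i : 'I_N, (val i != 0) &&
     ((tens_e i p == Some q) || (tens_f i p == Some q))].

Definition is_local_coenergy (u : T) (H : T * T -> nat) : Prop :=
  [/\ (forall p q, connect classical_rel p q -> H p = H q),
      H (u, u) = 0 &
      forall (i0 : 'I_N) x y z, val i0 = 0 -> tens_e i0 (x, y) = Some z ->
        if (e i0 x == Some z.1) && (z.2 == y)
        then H z = H (x, y) + 1
        else H z + 1 = H (x, y)].

(* intrinsic coenergy of b_L (x) ... (x) b_1, encoded as the list
   s = [:: b_1; b_2; ...; b_L]:  sum_{i=1}^{L-1} (L-i) H(b_{i+1} (x) b_i) *)
Definition coenergy (H : T * T -> nat) (s : seq T) : nat :=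
  match s with
  | [::] => 0
  | x0 :: _ => \sum_(j < (size s).-1)
                 ((size s).-1 - j) * H (nth x0 s j.+1, nth x0 s j)
  end.
End Crystal.

(* The dual crystal B^{1 vee}: element j^vee encoded as the same x : 'I_N
   (x standing for (x+1)^vee), with f_i(b^vee) = e_i(b)^vee and
   e_i(b^vee) = f_i(b)^vee, i.e. the roles of e and f are swapped. *)

From mathcomp Require Import all_boot zify.
Set Implicit Arguments. Unset Strict Implicit. Unset Printing Implicit Defensive.

(* The bijection j |-> (N+1-j)^vee is an isomorphism of crystals B^1 ~ B^{1 vee}
   once the colours are relabelled by the diagram automorphism i |-> -i, which
   fixes the colour 0; hence it pulls local coenergies of B^{1 vee} (x) B^{1 vee}
   back to local coenergies of B^1 (x) B^1.  These are unique: following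
   e-arrows down to u (x) u shows H(b2 (x) b1) = [b1 < b2], a 0-arrow being
   crossed exactly when b1 < b2.  So the two local coenergies agree termwise
   under the bijection, and so do the intrinsic coenergies. *)

Lemma iter_obind_None (A : Type) (h : A -> option A) k :
  iter k (obind h) None = None.
Proof. by elim: k => //= k ->. Qed.

Section Strings.
Variables (N : nat) (T : finType) (g : 'I_N -> T -> option T).

Lemma str_eq0 i b : g i b = None -> str g i b = 0.
Proof.
move=> gb; apply/eqP; rewrite -leqn0; apply/bigmax_leqP => -[[|k] _] //=.
by rewrite -[obind _ _]/(iter k.+1 (obind (g i)) (Some b)) iterSr /= gb iter_obind_None.
Qed.

Lemma str_gt0 i b : g i b != None -> 0 < str g i b.
Proof.
have T_gt1 : 1 < #|T|.+1 by rewrite ltnS; apply/card_gt0P; exists b.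
exact: (@leq_bigmax_cond _ _ (fun k : 'I__ => val k) (Ordinal T_gt1)).
Qed.

End Strings.

Section Twist.
Variables (N : nat) (T : finType) (e f e' f' : 'I_N -> T -> option T).
Variables (sigma : 'I_N -> 'I_N) (h : T -> T).
Hypothesis e_twist : forall i x, e' (sigma i) (h x) = omap h (e i x).
Hypothesis f_twist : forall i x, f' (sigma i) (h x) = omap h (f i x).

Lemma str_twist (g g' : 'I_N -> T -> option T) i b :
  (forall x, g' (sigma i) (h x) = omap h (g i x)) ->
  str g' (sigma i) (h b) = str g i b.
Proof.
move=> g_twist; have iter_twist k :
    iter k (obind (g' (sigma i))) (Some (h b)) = omap h (iter k (obind (g i)) (Some b)).
  by elim: k => //= k ->; case: (iter k _ _) => //= x; rewrite g_twist.
by apply: eq_bigl => k; rewrite iter_twist; case: (iter _ _ _).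
Qed.

Let eps_twist i b : eps e' (sigma i) (h b) = eps e i b.
Proof. exact: str_twist. Qed.

Let phi_twist i b : phi f' (sigma i) (h b) = phi f i b.
Proof. exact: str_twist. Qed.

Lemma tens_e_twist i x y :
  tens_e e' f' (sigma i) (h x, h y) = omap (fun p => (h p.1, h p.2)) (tens_e e f i (x, y)).
Proof.
by rewrite /tens_e eps_twist phi_twist !e_twist; case: ifP; [case: (e i x) | case: (e i y)].
Qed.

Lemma tens_f_twist i x y :
  tens_f e' f' (sigma i) (h x, h y) = omap (fun p => (h p.1, h p.2)) (tens_f e f i (x, y)).
Proof.
by rewrite /tens_f eps_twist phi_twist !f_twist; case: ifP; [case: (f i x) | case: (f i y)].
Qed.

Hypothesis sigma_eq0 : forall i, (val (sigma i) == 0) = (val i == 0).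

Lemma classical_rel_twist p q : classical_rel e f p q ->
  classical_rel e' f' (h p.1, h p.2) (h q.1, h q.2).
Proof.
case: p q => x y [x' y'] /existsP[i /andP[i_neq0 /orP arrow]].
apply/existsP; exists (sigma i); rewrite sigma_eq0 i_neq0 tens_e_twist tens_f_twist.
by case: arrow => /eqP-> /=; rewrite eqxx ?orbT.
Qed.

Lemma connect_classical_twist p q : connect (classical_rel e f) p q ->
  connect (classical_rel e' f') (h p.1, h p.2) (h q.1, h q.2).
Proof.
move=> /connectP[s]; elim: s p => [|r s IH] p /=; first by move=> _ ->.
by case/andP=> /classical_rel_twist/connect1 p_r /IH r_q /r_q; apply: connect_trans.
Qed.

Hypothesis h_inj : injective h.

Lemma local_coenergy_twist u H : is_local_coenergy e' f' (h u) H ->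
  is_local_coenergy e f u (fun p => H (h p.1, h p.2)).
Proof.
case=> H_classical H_u H_zero; split=> // [p q /connect_classical_twist/H_classical //|].
move=> i x y z i0 xy_z.
have sigma_i0 : val (sigma i) = 0 by apply/eqP; rewrite sigma_eq0 i0.
move: (H_zero _ (h x) (h y) (h z.1, h z.2) sigma_i0).
rewrite e_twist tens_e_twist xy_z /= -[Some (h z.1)]/(omap h (Some z.1)).
by rewrite !inj_eq //; [apply | exact: inj_omap].
Qed.

End Twist.

Section B1.
Variable N : nat.
Hypothesis N_gt1 : 1 < N.
Implicit Types (i x y a b : 'I_N).

Lemma B1eE i x : B1e i x = if x == i then Some (ord_pred i) else None.
Proof.
rewrite /B1e -val_eqE.
have -> : (if val i == 0 then val x == 0 else val x == val i) = (val x == val i).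
  by case: eqP => // ->.
case: eqP => // /val_inj ->; rewrite insubT ?ltn_pmod //; first lia.
by move=> ?; congr Some; apply: val_inj => /=; congr (_ %% _); lia.
Qed.

Lemma B1fE i x : B1f i x = if ordS x == i then Some i else None.
Proof.
rewrite /B1f -val_eqE /=; case: i x => i i_lt [x x_lt] /=.
have -> : (if i == 0 then x == N.-1 else x.+1 == i) = (x.+1 %% N == i).
  have [x1_lt | x1_eq] : x.+1 < N \/ x.+1 = N by lia.
    by rewrite modn_small //; case: (i =P 0) => [->|]; lia.
  by rewrite x1_eq modnn; case: (i =P 0) => [->|]; lia.
case: eqP => // x1_i; rewrite insubT ?ltn_pmod //; first lia.
by move=> ?; congr Some; exact: val_inj.
Qed.

Lemma ordS_neq x : ordS x != x.
Proof.
rewrite -val_eqE /=; case: x => x x_lt /=.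
have [x1_lt | x1_eq] : x.+1 < N \/ x.+1 = N by lia.
  by rewrite modn_small //; lia.
by rewrite x1_eq modnn; lia.
Qed.

Lemma ord_pred_neq x : ord_pred x != x.
Proof.
by apply/eqP => pred_x; have := ordS_neq (ord_pred x); rewrite ord_predK {1}pred_x eqxx.
Qed.

Lemma ordS_rev_ord x : ordS (rev_ord x) = rev_ord (ord_pred x).
Proof.
apply: val_inj => /=; case: x => [[|x] x_lt] /=.
  by rewrite subn1 prednK ?modnn ?modn_small //; lia.
by rewrite modnDr [x %% N]modn_small ?modn_small; lia.
Qed.

Definition opp_colour i : 'I_N := rev_ord (ord_pred i).

Lemma opp_colour_eq0 i : (val (opp_colour i) == 0) = (val i == 0).
Proof.
case: i => [[|i] i_lt] /=; first by rewrite add0n modn_small; lia.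
by rewrite modnDr modn_small; lia.
Qed.

Lemma B1f_opp_colour i x :
  B1f (opp_colour i) (rev_ord x) = omap (@rev_ord N) (B1e i x).
Proof.
rewrite B1fE B1eE ordS_rev_ord (inj_eq rev_ord_inj) (inj_eq (@ord_pred_inj N)).
by case: eqP.
Qed.

Lemma B1e_opp_colour i x :
  B1e (opp_colour i) (rev_ord x) = omap (@rev_ord N) (B1f i x).
Proof.
rewrite B1fE B1eE (inj_eq rev_ord_inj) /opp_colour -ordS_rev_ord ordSK.
by rewrite -(inj_eq (@ordS_inj N)) ord_predK; case: eqP.
Qed.

Lemma val_ord_pred x : ord_pred x = (if x == 0 :> nat then N.-1 else x.-1) :> nat.
Proof. by case: x => [[|x] x_lt] /=; rewrite ?add0n ?modnDr modn_small //; lia. Qed.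

Lemma tens_e_B1 x y : tens_e (@B1e N) (@B1f N) y (x, y) =
  Some (if x == y then (ord_pred x, y) else (x, ord_pred y)).
Proof.
have f_yy : B1f y y = None by rewrite B1fE (negbTE (ordS_neq y)).
rewrite /tens_e /phi /eps (str_eq0 f_yy) [B1e y y]B1eE eqxx.
have [-> | x_neq_y] := eqVneq x y; first by rewrite str_gt0 // B1eE eqxx.
by rewrite str_eq0 // B1eE (negbTE x_neq_y).
Qed.

Section B1Coenergy.
Variables (u : 'I_N) (H : 'I_N * 'I_N -> nat).
Hypothesis u0 : u = 0 :> nat.
Hypothesis H_coenergy : is_local_coenergy (@B1e N) (@B1f N) u H.

Lemma B1_coenergy_classical_step a b : b != 0 :> nat ->
  H (a, b) = H (if a == b then (ord_pred a, b) else (a, ord_pred b)).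
Proof.
case: H_coenergy => H_classical _ _ b_neq0.
by apply/H_classical/connect1/existsP; exists b; rewrite b_neq0 tens_e_B1 eqxx.
Qed.

Lemma B1_coenergy_zero_step a b : b = 0 :> nat -> a != b ->
  H (a, ord_pred b) + 1 = H (a, b).
Proof.
case: H_coenergy => _ _ H_zero b0 a_neq_b; have := H_zero b a b _ b0 (tens_e_B1 a b).
by rewrite (negbTE a_neq_b) /= (negbTE (ord_pred_neq b)) andbF.
Qed.

Lemma B1_coenergy_le a b : a <= b -> H (a, b) = 0.
Proof.
have [k] := ubnP (a + b); elim: k a b => // k IH a b ab_k a_le_b.
have [b0 | b_neq0] := eqVneq (b : nat) 0.
  have [-> ->] : a = u /\ b = u by split; apply: val_inj => /=; lia.
  by case: H_coenergy.
have eq_ab : (a == b) = (a == b :> nat) by [].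
rewrite B1_coenergy_classical_step // eq_ab.
case: ltngtP a_le_b => // a_b _.
all: by apply: IH; rewrite val_ord_pred ?a_b (negbTE b_neq0); lia.
Qed.

Lemma B1_coenergy_gt a b : b < a -> H (a, b) = 1.
Proof.
have [k] := ubnP (b : nat); elim: k b => // k IH b b_k b_lt_a.
have a_neq_b : a != b by rewrite -val_eqE /=; lia.
have [b0 | b_neq0] := eqVneq (b : nat) 0.
  rewrite -(B1_coenergy_zero_step b0 a_neq_b) B1_coenergy_le // val_ord_pred b0 /=.
  by have := ltn_ord a; lia.
rewrite B1_coenergy_classical_step // (negbTE a_neq_b).
by apply: IH; rewrite val_ord_pred (negbTE b_neq0); lia.
Qed.

Lemma B1_local_coenergyE a b : H (a, b) = (b < a).
Proof. by case: ltnP => [/B1_coenergy_gt | /B1_coenergy_le]. Qed.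

End B1Coenergy.

Lemma B1dual_local_coenergyE (u : 'I_N) (H : 'I_N * 'I_N -> nat) :
  u = N.-1 :> nat ->
  is_local_coenergy (@B1f N) (@B1e N) u H ->
  forall a b, H (rev_ord a, rev_ord b) = (b < a).
Proof.
move=> uN H_coenergy a b.
apply: (B1_local_coenergyE (u := rev_ord u) (H := fun p => H (rev_ord p.1, rev_ord p.2))).
  by rewrite /= uN; lia.
apply: (local_coenergy_twist B1f_opp_colour B1e_opp_colour opp_colour_eq0 rev_ord_inj).
by rewrite rev_ordK.
Qed.

End B1.

Lemma coenergy_map (T T' : finType) (h : T -> T')
    (H : T * T -> nat) (H' : T' * T' -> nat) s :
  (forall x y, H (x, y) = H' (h x, h y)) -> coenergy H s = coenergy H' (map h s).
Proof.
move=> HH'; case: s => [|x0 s] //=; rewrite size_map.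
apply: eq_bigr => j _; have j_lt := ltn_ord j.
by rewrite -[h x0 :: _]/(map h (x0 :: s)) !(nth_map x0) //= ?HH' // ltnW.
Qed.

Theorem proposition42 (n L : nat) (hn : 1 <= n) (hL : 1 <= L)
  (u1 u2 : 'I_(n.*2)) (hu1 : val u1 = 0) (hu2 : val u2 = (n.*2).-1)
  (H1 H2 : 'I_(n.*2) * 'I_(n.*2) -> nat)
  (hH1 : is_local_coenergy (@B1e (n.*2)) (@B1f (n.*2)) u1 H1)
  (hH2 : is_local_coenergy (@B1f (n.*2)) (@B1e (n.*2)) u2 H2)
  (c : L.-tuple 'I_(n.*2)) :
  coenergy H1 c = coenergy H2 (map (@rev_ord (n.*2)) c).
Proof.
have N_gt1 : 1 < n.*2 by rewrite -addnn; lia.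
apply: coenergy_map => a b.
by rewrite (B1_local_coenergyE N_gt1 hu1 hH1) (B1dual_local_coenergyE N_gt1 hu2 hH2).
Qed.
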